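(* Let $(X,\mathrm{d})$ be a compact metric space, let $k\geq 1$ and let $\mathscr{F}=\{f_1,\dots,f_k\}$ be a finite family of homeomorphisms of $X$. Consider the symbolic one-step skew-product $\Phi=\tau\ltimes\mathscr{F}$ on $\Sigma_k\times X$. Suppose that $X$ is a strict attractor of $\mathscr{F}$. Then the strong unstable foliation $\mathcal{F}^{uu}(\Phi)$ is minimal, i.e. every leaf $W^{uu}(\omega,x)$, $(\omega,x)\in\Sigma_k\times X$, is dense in $\Sigma_k\times X$.
   Context: $\Sigma_k=\{1,\dots,k\}^{\mathbb{Z}}$ with the metric $\mathrm{d}_{\Sigma_k}(\omega,\omega')=\nu^m$, $m=\min\{i\geq 0:\omega_i\neq\omega'_i\text{ or }\omega_{-i}\neq\omega'_{-i}\}$, for a fixed $0<\nu<1$; $\tau$ is the shift $(\tau\omega)_i=\omega_{i+1}$. The skew-product is $\Phi(\omega,x)=(\tau(\omega),f_{\omega_0}(x))$. The local stable (resp. unstable) set $W^s_{loc}(\omega)$ (resp. $W^u_{loc}(\omega)$) is the set of $\omega'\in\Sigma_k$ with $\omega'_i=\omega_i$ for all $i\geq0$ (resp. for all $i<0$). Set $W^{ss}_{loc}(\omega,x)=W^s_{loc}(\omega)\times\{x\}$, $W^{uu}_{loc}(\omega,x)=W^u_{loc}(\omega)\times\{x\}$, $W^{ss}(\omega,x)=\bigcup_{n\geq0}\Phi^{-n}(W^{ss}_{loc}(\Phi^n(\omega,x)))$, $W^{uu}(\omega,x)=\bigcup_{n\geq0}\Phi^{n}(W^{uu}_{loc}(\Phi^{-n}(\omega,x)))$.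 $\mathcal{F}^{uu}(\Phi)=\{W^{uu}(\omega,x)\}$, $\mathcal{F}^{ss}(\Phi)=\{W^{ss}(\omega,x)\}$; a foliation is minimal if each leaf is dense. The Hutchinson operator of $\mathscr{F}$ is $F(A)=f_1(A)\cup\dots\cup f_k(A)$ on the hyperspace $\mathscr{K}(X)$ of nonempty compact subsets of $X$ with the Hausdorff metric $\mathrm{d_H}$. A set $K\in\mathscr{K}(X)$ is a strict attractor of $\mathscr{F}$ if there is an open $U\supset K$ such that $F^n(S)\to K$ in $\mathrm{d_H}$ for every nonempty compact $S\subset U$; for $K=X$ this means $F^n(S)\to X$ for every $S\in\mathscr{K}(X)$. *)

From HB Require Import structures.
From mathcomp Require Import all_boot all_order all_algebra.
From mathcomp Require Import all_classical all_reals topology normedtype.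
Set Implicit Arguments. Unset Strict Implicit. Unset Printing Implicit Defensive.
Import Order.TTheory GRing.Theory Num.Theory.
Local Open Scope classical_set_scope.
Local Open Scope ring_scope.

(* Sigma_k = {symbols}^Z; symbols {1..k} are represented by 'I_k. *)
Definition Sigma (k : nat) := int -> 'I_k.

Definition shift k (w : Sigma k) : Sigma k := fun i => w (i + 1)%R.

Definition agree_below k (w w' : Sigma k) (m : nat) : Prop :=
  forall i : int, (`|i| < m)%N -> w i = w' i.

(* d_Sigma(w,w') = nu^m, m = min{i >= 0 : w_i <> w'_i or w_-i <> w'_-i},
   (0 if w = w'); written as the infimum of nu^m over the (downward closed)
   set of m such that w, w' agree on all |i| < m. *)
Definition dSigma {R : realType} (nu : R) k (w w' : Sigma k) : R :=
  inf [set nu ^+ m | m in [set m | agree_below w w' m]].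

Definition Phi k {X : Type} (f : 'I_k -> X -> X) (p : Sigma k * X) : Sigma k * X :=
  (shift p.1, f (p.1 0%R) p.2).

Definition Wu_loc k (w : Sigma k) : set (Sigma k) :=
  [set w' | forall i : int, (i < 0)%R -> w' i = w i].

Definition Wuu_loc k {X : Type} (p : Sigma k * X) : set (Sigma k * X) :=
  [set q | Wu_loc p.1 q.1 /\ q.2 = p.2].

(* W^uu(p) = U_n Phi^n (W^uu_loc(Phi^-n p)); Phi^-n p is the (unique, as
   Phi is bijective) point q with Phi^n q = p. *)
Definition Wuu k {X : Type} (f : 'I_k -> X -> X) (p : Sigma k * X) :
    set (Sigma k * X) :=
  [set r | exists n q q', iter n (Phi f) q = p /\ Wuu_loc q q' /\
                          iter n (Phi f) q' = r].

Definition homeomorphism {X : topologicalType} (h : X -> X) : Prop :=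
  continuous h /\ exists h' : X -> X,
    [/\ cancel h h', cancel h' h & continuous h'].

Definition hutchinson k {X : Type} (f : 'I_k -> X -> X) (A : set X) : set X :=
  \bigcup_(i in [set: 'I_k]) (f i @` A).

Definition nbhs_set {R : realType} {X : pseudoMetricType R} (A : set X) (e : R)
  : set X := [set y | exists2 a, A a & ball a e y].

(* A_n --> K in the Hausdorff metric d_H: for every e > 0, eventually
   A_n is in the e-neighbourhood of K and K in the e-neighbourhood of A_n. *)
Definition hausdorff_cvg {R : realType} {X : pseudoMetricType R}
  (A : nat -> set X) (K : set X) : Prop :=
  forall e : R, 0 < e -> exists N : nat, forall n : nat, (N <= n)%N ->
    A n `<=` nbhs_set K e /\ K `<=` nbhs_set (A n) e.

Definition strict_attractor {R : realType} {X : pseudoMetricType R} k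
  (f : 'I_k -> X -> X) (K : set X) : Prop :=
  [/\ compact K, K !=set0 &
   exists U : set X, [/\ open U, K `<=` U &
     forall S : set X, compact S -> S !=set0 -> S `<=` U ->
       hausdorff_cvg (fun n => iter n (hutchinson f) S) K]].

(* density in Sigma_k x X with the product (max) metric of d_Sigma and d *)
Definition dense_SigmaX {R : realType} (nu : R) {X : pseudoMetricType R} k
  (A : set (Sigma k * X)) : Prop :=
  forall (p : Sigma k * X) (e : R), 0 < e ->
    exists2 q, A q & dSigma nu p.1 q.1 < e /\ ball p.2 e q.2.

From HB Require Import structures.
From mathcomp Require Import all_boot all_order all_algebra.
From mathcomp Require Import all_classical all_reals topology normedtype.
From mathcomp Require Import sequences zify.
Import Order.TTheory GRing.Theory Num.Theory.
Local Open Scope classical_set_scope.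
Local Open Scope ring_scope.

(* Write f_s = f_(s_(n-1)) o ... o f_(s_0) for a word s.  The heart of the proof
   is a UNIFORM reachability statement: for every ball B(x0, e) there is a
   length n such that EVERY point v is sent into B(x0, e) by some f_s with
   |s| = n.  Applying the attractor property to singletons only gives, for
   each v, all lengths n >= N_v; uniformity comes from a Baire-category
   argument in the compact space X (some N works on an open set O) combined
   with a compactness argument (every v reaches O in a bounded number of
   steps), after which words are padded to a common length.

   Density of W^uu(w, x) then follows: go back n steps along the orbit of
   (w, x), replace the future of the symbolic coordinate by a reaching word s
   followed by the central block of the target sequence w0, and go forward
   n steps again.  The resulting point lies on the unstable leaf, its symbolic
   part agrees with w0 on a large window, and its fibre part is close to the
   target point by continuity of the last block of maps. *)

Section Words.
Local Set Implicit Arguments. Local Unset Strict Implicit.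
Variables (X : Type) (k : nat) (f : 'I_k -> X -> X).

Definition word_map (s : seq 'I_k) (v : X) : X := foldl (fun x i => f i x) v s.

Lemma word_map_cat s1 s2 v :
  word_map (s1 ++ s2) v = word_map s2 (word_map s1 v).
Proof. by rewrite /word_map foldl_cat. Qed.

Lemma word_map_surj :
  (forall i y, exists u, f i u = y) -> forall s y, exists u, word_map s u = y.
Proof.
move=> fsurj; elim=> [|i s IH] y; first by exists y.
have [u' <-] := IH y; have [u <-] := fsurj i u'.
by exists u.
Qed.

Lemma hutchinson_iter_set1 n v a :
  iter n (hutchinson f) [set v] a -> exists s, size s = n /\ a = word_map s v.
Proof.
elim: n a => [|n IH] a /=; first by move=> ->; exists [::].
move=> [i _ [b /IH [s [sz ->]] <-]].
by exists (rcons s i); rewrite size_rcons sz /word_map foldl_rcons.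
Qed.

End Words.

Lemma word_map_continuous {X : topologicalType} {k : nat} (f : 'I_k -> X -> X) s :
  (forall i, continuous (f i)) -> continuous (word_map f s).
Proof.
move=> fc; elim: s => [|i s IH] x /=; first exact: cvg_id.
by apply: (@continuous_comp _ _ _ (f i) (word_map f s)); [apply: fc|apply: IH].
Qed.

Lemma continuous_ball {R : realType} {X Y : pseudoMetricType R} {h : X -> Y}
    u (e : R) : continuous h -> 0 < e ->
  exists2 d, 0 < d & forall u', ball u d u' -> ball (h u) e (h u').
Proof.
move=> hc e0; have /nbhs_ballP [d /= d0 sub] := hc u _ (nbhsx_ballx (h u) _ e0).
by exists d.
Qed.

Section BaireCompact.
Local Set Implicit Arguments. Local Unset Strict Implicit.
Variables (R : realType) (X : pseudoMetricType R).

Lemma shrink_avoiding (C O : set X) : closed C -> open O -> ~ (O `<=` C) ->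
  exists O', [/\ open O', O' !=set0 & closure O' `<=` O `&` ~` C].
Proof.
move=> cC oO nsub.
have [c [Oc nCc]] : exists c, O c /\ ~ C c.
  apply: contrapT => h; apply: nsub => c Oc; apply: contrapT => nCc.
  by apply: h; exists c.
have /nbhs_ballP [r /= r0 sub] : nbhs c (O `&` ~` C).
  by apply: open_nbhs_nbhs; split => //; exact: openI (closed_openC cC).
have r20 : 0 < r / 2 by rewrite divr_gt0.
exists (ball c (r / 2))°; split; first exact: open_interior.
  by exists c; exact: nbhsx_ballx.
move=> y /(closureS (@interior_subset _ _)) /subset_closure_half => h.
exact/sub/h.
Qed.

Lemma baire_compact (P : nat -> set X) :
  compact [set: X] -> [set: X] !=set0 -> (forall N, closed (P N)) ->
  (forall v, exists N, P N v) ->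
  exists N O, [/\ open O, O !=set0 & O `<=` P N].
Proof.
move=> cT [x0 _] Pc Pcov; apply: contrapT => nH.
(* a decreasing sequence of nonempty open sets, the (n+1)-th avoiding P n *)
have step (NO : nat * set X) : exists O', open NO.2 -> NO.2 !=set0 ->
    [/\ open O', O' !=set0 & closure O' `<=` NO.2 `&` ~` P NO.1].
  case: NO => N O /=.
  have [[oO nO]|h] := pselect (open O /\ O !=set0); last first.
    by exists set0 => oO nO; exfalso; exact: h.
  have [|O' HO'] := shrink_avoiding (Pc N) oO; last by exists O'.
  by move=> sub; apply: nH; exists N, O.
have [g Hg] := choice step.
pose Os := fix Os n := if n is m.+1 then g (m, Os m) else [set: X].
have Os_open n : open (Os n) /\ Os n !=set0.
  elim: n => [|n [oO nO]]; first by split; [exact: openT|exists x0].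
  by have [] := Hg (n, Os n) oO nO.
have Os_avoid n : closure (Os n.+1) `<=` Os n `&` ~` P n.
  by have [oO nO] := Os_open n; have [] := Hg (n, Os n) oO nO.
have Os_decr d n : Os (d + n)%N `<=` Os n.
  elim: d => [|d IH] //= y Hy.
  by apply: IH; have [] := Os_avoid (d + n)%N y (subset_closure Hy).
(* a cluster point of points c n in Os n lies in no P N *)
have [c Hc] := choice (fun n => (Os_open n).2).
have [p [_ clp]] := cT (c @ \oo) _ filterT.
have [N PNp] := Pcov p.
suff /Os_avoid [] : closure (Os N.+1) p by [].
move=> B Bp; apply: (clp _ _ _ Bp); exists N.+1 => // m /= Nm.
by have := Hc m; rewrite -(subnK Nm); apply: Os_decr.
Qed.

End BaireCompact.

Section UniformReach.
Local Set Implicit Arguments. Local Unset Strict Implicit.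
Variables (R : realType) (X : pseudoMetricType R) (k : nat) (f : 'I_k -> X -> X).
Hypothesis sa : strict_attractor f [set: X].

(* Since F^n({v}) -> X, each v reaches every ball of radius e by words of
   every sufficiently large length. *)
Lemma attractor_orbits_dense v (e : R) : 0 < e ->
  exists N, forall n, (N <= n)%N -> forall x,
    exists s, size s = n /\ ball (word_map f s v) e x.
Proof.
move: sa => [_ _ [U [_ TU cvgU]]] e0.
have /(_ e e0) [N HN] := cvgU [set v] (@compact_set1 X v) (ex_intro _ v erefl)
  (fun y _ => TU y I).
exists N => n Nn x.
have [_ /(_ x I) [a Ha b]] := HN n Nn.
have [s [sz ea]] := hutchinson_iter_set1 Ha.
by exists s; rewrite -ea.
Qed.

Hypotheses (cT : compact [set: X]) (fc : forall i, continuous (f i)).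

Definition hits x0 (r : R) n : set X :=
  [set v | exists t : n.-tuple 'I_k, closed_ball x0 r (word_map f t v)].

Lemma hits_closed x0 r n : closed (hits x0 r n).
Proof.
have -> : hits x0 r n = \bigcup_(t in [set: n.-tuple 'I_k])
    word_map f t @^-1` closed_ball x0 r.
  by apply/seteqP; split => v /= [t]; exists t.
apply: closed_bigcup => [|t _]; first exact: finite_finset.
apply: (continuous_closedP _).1; first exact: word_map_continuous.
exact: closed_ball_closed.
Qed.

(* Baire: a single N works for all lengths n >= N on some open set. *)
Lemma eventually_hits_open x0 (r : R) : 0 < r ->
  exists N O, [/\ open O, O !=set0 &
    O `<=` [set v | forall n, (N <= n)%N -> hits x0 r n v]].
Proof.
move=> r0; apply: baire_compact cT _ _ _; first by case: sa.
  move=> N; rewrite (_ : [set v | _] = \bigcap_(n in [set n | N <= n]%N)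
                                        hits x0 r n); last first.
    by apply/seteqP; split => v /= H n; apply: H.
  by apply: closed_bigI => n _; exact: hits_closed.
move=> v; have [N HN] := attractor_orbits_dense v r0.
exists N => n Nn; have [s [sz b]] := HN n Nn x0.
exists (@Tuple n _ s (introT eqP sz)).
exact/subset_closure/ball_sym.
Qed.

(* By compactness, every point reaches a given nonempty open set O through
   words of bounded length. *)
Lemma bounded_reach (O : set X) : open O -> O !=set0 ->
  exists S, forall v, exists s, (size s <= S)%N /\ O (word_map f s v).
Proof.
move=> oO [o Oo].
have /nbhs_ballP [eta /= eta0 subO] : nbhs o O by exact: open_nbhs_nbhs.
pose reach S := [set v | exists s, (size s <= S)%N /\ O (word_map f s v)].
have reach_open S : open (reach S).
  rewrite openE => v [s [sz Os]].
  have nbO : nbhs v (word_map f s @^-1` O).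
    exact: word_map_continuous f s fc v _ (open_nbhs_nbhs (conj oO Os)).
  by apply: filterS nbO => y Oy; exists s.
have reach_mono a b v : (a <= b)%N -> reach a v -> reach b v.
  by move=> ab [s [sz Os]]; exists s; split => //; exact: leq_trans ab.
have := (compact_near_coveringP _).1 cT nat \oo (fun S v => reach S v) _.
case=> [v _|S _ HS]; last by exists S => v; exact: HS S (leqnn _) v I.
have [N HN] := attractor_orbits_dense v eta0.
have [s [sz b]] := HN N (leqnn _) o.
have reachNv : reach N v by exists s; split; [rewrite sz|apply/subO/ball_sym].
hnf; exists (reach N, [set i | (N <= i)%N]); first split.
- exact: (open_nbhs_nbhs (conj (reach_open N) reachNv)).
- by exists N.
by move=> [y i] /= [Ry Ni]; exact: reach_mono Ni Ry.
Qed.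

Lemma uniform_reach x0 (e : R) : 0 < e ->
  exists n, forall v, exists s, size s = n /\ ball x0 e (word_map f s v).
Proof.
move=> e0; have e20 : 0 < e / 2 by rewrite divr_gt0.
have [N [O [oO nO OP]]] := eventually_hits_open x0 e20.
have [S HS] := bounded_reach oO nO.
exists (S + N)%N => v; have [s [sz Os]] := HS v.
have [t ht] := OP _ Os (S + N - size s)%N ltac:(lia).
exists (s ++ t); split; first by rewrite size_cat size_tuple; lia.
by rewrite word_map_cat; exact: subset_closure_half.
Qed.

End UniformReach.

Section SkewProduct.
Local Set Implicit Arguments. Local Unset Strict Implicit.
Variables (X : Type) (k : nat) (f : 'I_k -> X -> X).

Definition front (w : Sigma k) (n : nat) : seq 'I_k :=
  [seq w j%:Z | j <- iota 0 n].

Lemma iter_Phi n w x :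
  iter n (Phi f) (w, x) = (fun i => w (i + n%:Z), word_map f (front w n) x).
Proof.
elim: n => [|n IH].
  by congr pair; apply: funext => i; rewrite addr0.
have -> : front w n.+1 = front w n ++ [:: w n%:Z].
  by rewrite /front -addn1 iotaD map_cat.
rewrite iterS IH /Phi /shift word_map_cat /=; congr pair.
by apply: funext => i; congr w; lia.
Qed.

Definition Phi_inv (g : 'I_k -> X -> X) (p : Sigma k * X) : Sigma k * X :=
  (fun i => p.1 (i - 1), g (p.1 (-1)) p.2).

Variable g : 'I_k -> X -> X.
Hypothesis gK : forall i, cancel (g i) (f i).

Lemma Phi_Phi_inv p : Phi f (Phi_inv g p) = p.
Proof.
case: p => w x; rewrite /Phi /Phi_inv /shift /=; congr pair.
  by apply: funext => i /=; congr w; lia.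
by rewrite add0r gK.
Qed.

Lemma iter_Phi_inv n p : iter n (Phi f) (iter n (Phi_inv g) p) = p.
Proof. by elim: n p => [|n IH] p //; rewrite iterSr iterS Phi_Phi_inv IH. Qed.

Lemma Wuu_backward n p (w' : Sigma k) :
  Wu_loc (iter n (Phi_inv g) p).1 w' ->
  Wuu f p (iter n (Phi f) (w', (iter n (Phi_inv g) p).2)).
Proof.
move=> loc; exists n, (iter n (Phi_inv g) p), (w', (iter n (Phi_inv g) p).2).
by split; [exact: iter_Phi_inv|split].
Qed.

End SkewProduct.

Section Graft.
Local Set Implicit Arguments. Local Unset Strict Implicit.
Variable k : nat.

Definition graft (past : Sigma k) (s : seq 'I_k) (fut : Sigma k) : Sigma k :=
  fun i => if i < 0 then past i
           else if i < (size s)%:Z then nth (fut 0) s `|i|%N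
           else fut (i - (size s)%:Z).

Lemma graft_past past s fut : Wu_loc past (graft past s fut).
Proof. by move=> i i0; rewrite /graft i0. Qed.

Lemma graft_future past s fut i : 0 <= i ->
  graft past s fut (i + (size s)%:Z) = fut i.
Proof. by move=> i0; rewrite /graft; do 2 (case: ifP => ?; first lia); congr fut; lia. Qed.

Lemma front_graft past s fut m :
  front (graft past s fut) (size s + m) = s ++ front fut m.
Proof.
rewrite /front iotaD map_cat; congr cat.
  rewrite -[X in _ = X](mkseq_nth (fut 0) s) /mkseq; apply/eq_in_map => j.
  rewrite mem_iota => /andP [_ js].
  have [j_nneg j_small] : (j%:Z < 0) = false /\ j%:Z < (size s)%:Z by lia.
  by rewrite /graft j_nneg j_small.
rewrite add0n -{1}[size s]addn0 iotaDl -map_comp; apply/eq_in_map => j _ /=.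
have [j_nneg j_large] : ((size s + j)%:Z < 0) = false /\
                        ((size s + j)%:Z < (size s)%:Z) = false by lia.
by rewrite /graft j_nneg j_large; congr fut; lia.
Qed.

End Graft.

Lemma dSigma_le {R : realType} {nu : R} {k : nat} {w w' : Sigma k} {m : nat} :
  0 <= nu -> agree_below w w' m -> dSigma nu w w' <= nu ^+ m.
Proof.
move=> nu0 agree; apply: ge_inf; last by exists m.
by exists 0 => _ [j _ <-]; exact: exprn_ge0.
Qed.

Lemma exists_pow_lt {R : realType} {nu e : R} : 0 < nu -> nu < 1 -> 0 < e ->
  exists m : nat, nu ^+ m < e.
Proof.
move=> nu0 nu1 e0; have nuabs : `|nu| < 1 by rewrite gtr0_norm.
have [N _ HN] := cvgr_lt 0 (cvg_expr nuabs) e e0.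
by exists N; apply: HN => /=.
Qed.

Theorem theoremA (R : realType) (nu : R) (X : pseudoMetricType R)
  (k : nat) (f : 'I_k -> X -> X) :
  0 < nu -> nu < 1 ->
  hausdorff_space X -> compact [set: X] -> (0 < k)%N ->
  (forall i, homeomorphism (f i)) ->
  strict_attractor f [set: X] ->
  forall p : Sigma k * X, dense_SigmaX nu (Wuu f p).
Proof.
move=> nu0 nu1 _ cT _ fh sa [w x] [w0 y0] e e0 /=.
have fc i : continuous (f i) := (fh i).1.
have f_inv i : exists gi, cancel gi (f i) by have [h [_ hK _]] := (fh i).2; exists h.
have [g gK] := choice f_inv.
have [m nume] := exists_pow_lt nu0 nu1 e0.
(* the target sequence delayed by m, whose first m letters form its centre *)
pose back : Sigma k := fun i => w0 (i - m%:Z).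
have [u0 <-] := word_map_surj (fun i y => ex_intro _ (g i y) (gK i y))
  (front back m) y0.
have [del del0 Hdel] := continuous_ball u0 _ (word_map_continuous f (front back m) fc) e0.
have [L HL] := uniform_reach sa cT fc u0 del0.
pose q := iter (L + m) (Phi_inv g) (w, x).
have [s [sz Hs]] := HL q.2.
exists (iter (L + m) (Phi f) (graft q.1 s back, q.2)).
  exact/Wuu_backward/graft_past.
rewrite iter_Phi /= -sz front_graft word_map_cat; split; last exact: Hdel.
apply: le_lt_trans nume; apply: dSigma_le (ltW nu0) _ => i im.
have i_nneg : 0 <= i + m%:Z by lia.
by rewrite PoszD (addrC (size s)%:Z) addrA graft_future // /back addrK.
Qed.
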